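(* Let $0<\varepsilon_0\le1$. For an expansion with coefficients $a_l$, $h_A\le l\le k_A$, set $a_l=0$ for $l\notin[h_A,k_A]$ (similarly for other letters). The following hold. (i) If $A$ is an $(h_A,k_A,\delta_A,G_A,\varepsilon_A)$-expansion with coefficients $a_l$ and $c\in\mathbb{R}$, then $C=cA$ satisfies $C(\varepsilon)=\sum_{l=h_A}^{k_A}ca_l\varepsilon^l+o_C(\varepsilon)$ with $|o_C(\varepsilon)|\le |c|G_A\varepsilon^{k_A+\delta_A}$ for $0<\varepsilon\le\varepsilon_A$ (i.e. $h_C=h_A,k_C=k_A$, $\delta_C=\delta_A$, $G_C=|c|G_A$, $\varepsilon_C=\varepsilon_A$). (ii) If $A$ is an $(h_A,k_A,\delta_A,G_A,\varepsilon_A)$-expansion with coefficients $a_l$ and $B$ an $(h_B,k_B,\delta_B,G_B,\varepsilon_B)$-expansion with coefficients $b_l$, then $C=A+B$ is an $(h_C,k_C,\delta_C,G_C,\varepsilon_C)$-expansion with $h_C=h_A\wedge h_B$, $k_C=k_A\wedge k_B$, coefficients $c_r=a_r+b_r$, $\delta_C=\delta_A\mathrm{I}(k_A<k_B)+(\delta_A\wedge\delta_B)\mathrm{I}(k_A=k_B)+\delta_B\mathrm{I}(k_B<k_A)\ \ (\ge\delta_A\wedge\delta_B)$, $\varepsilon_C=\varepsilon_A\wedge\varepsilon_B$, and $G_C=G_A\varepsilon_C^{k_A+\delta_A-k_C-\delta_C}+\sum_{k_C<i\le k_A}|a_i|\varepsilon_C^{i-k_C-\delta_C}+G_B\varepsilon_C^{k_B+\delta_B-k_C-\delta_C}+\sum_{k_C<j\le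 k_B}|b_j|\varepsilon_C^{j-k_C-\delta_C}$. (iii) Under the hypotheses of (ii), $C=A\cdot B$ is an $(h_C,k_C,\delta_C,G_C,\varepsilon_C)$-expansion with $h_C=h_A+h_B$, $k_C=(k_A+h_B)\wedge(k_B+h_A)$, coefficients $c_r=\sum_{i+j=r,\,h_A\le i\le k_A,\,h_B\le j\le k_B}a_ib_j$, $\delta_C=\delta_A\mathrm{I}(k_A+h_B<k_B+h_A)+(\delta_A\wedge\delta_B)\mathrm{I}(k_A+h_B=k_B+h_A)+\delta_B\mathrm{I}(k_A+h_B>k_B+h_A)\ (\ge\delta_A\wedge\delta_B)$, $\varepsilon_C=\varepsilon_A\wedge\varepsilon_B$, and $G_C=\sum_{k_C<i+j,\,h_A\le i\le k_A,\,h_B\le j\le k_B}|a_i||b_j|\varepsilon_C^{i+j-k_C-\delta_C}+G_A\sum_{h_B\le j\le k_B}|b_j|\varepsilon_C^{j+k_A+\delta_A-k_C-\delta_C}+G_B\sum_{h_A\le i\le k_A}|a_i|\varepsilon_C^{i+k_B+\delta_B-k_C-\delta_C}+G_AG_B\varepsilon_C^{k_A+k_B+\delta_A+\delta_B-k_C-\delta_C}$. (iv) Let $B$ be a pivotal $(h_B,k_B,\delta_B,G_B,\varepsilon_B)$-expansion with coefficients $b_l$. Put $h_C=-h_B$, $k_C=k_B-2h_B$, $c_{h_C}=b_{h_B}^{-1}$, $c_{h_C+n}=-b_{h_B}^{-1}\sum_{m=1}^n b_{h_B+m}c_{h_C+n-m}$ for $n=1,\dots,k_B-h_B$; $\delta_C=\delta_B$;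 $\tilde\varepsilon_B=\Big(\frac{|b_{h_B}|}{2\big(\sum_{h_B<i\le k_B}|b_i|\varepsilon_B^{i-h_B-\delta_B}+G_B\varepsilon_B^{k_B-h_B}\big)}\Big)^{1/\delta_B}$, $\varepsilon_C=\varepsilon_B\wedge\tilde\varepsilon_B$; $G_C=\big(\tfrac{|b_{h_B}|}{2}\big)^{-1}\Big(\sum_{k_B-h_B<i+j,\,h_B\le i\le k_B,\,h_C\le j\le k_C}|b_i||c_j|\varepsilon_C^{i+j-k_B+h_B-\delta_B}+G_B\sum_{h_C\le j\le k_C}|c_j|\varepsilon_C^{j+h_B}\Big)$. Then there exists $\varepsilon'_0$ with $\varepsilon_C\le\varepsilon'_0\le\varepsilon_0$ such that $B(\varepsilon)\ne0$ for $\varepsilon\in(0,\varepsilon'_0]$, and $C=1/B$ on $(0,\varepsilon'_0]$ is a pivotal $(h_C,k_C,\delta_C,G_C,\varepsilon_C)$-expansion with coefficients $c_l$. (v) Let $A$ be an $(h_A,k_A,\delta_A,G_A,\varepsilon_A)$-expansion with coefficients $a_l$ and $B$ a pivotal $(h_B,k_B,\delta_B,G_B,\varepsilon_B)$-expansion with coefficients $b_l$; let $h_C,k_C,c_l,\delta_C,G_C,\varepsilon_C,\tilde\varepsilon_B$ be as in (iv). Put $h_D=h_A-h_B$, $k_D=(k_A-h_B)\wedge(k_B-2h_B+h_A)$, $d_r=\sum_{i+j=r,\,h_A\le i\le k_A,\,h_C\le j\le k_C}a_ic_j$ for $h_D\le r\le k_D$, and $\delta_D=\delta_A\mathrm{I}(k_A-h_B<k_B-2h_B+h_A)+(\delta_A\wedge\delta_B)\mathrm{I}(k_A-h_B=k_B-2h_B+h_A)+\delta_B\mathrm{I}(k_A-h_B>k_B-2h_B+h_A)\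 (\ge\delta_A\wedge\delta_B)$. Then there exists $\varepsilon'_0$ with $\varepsilon_D\le\varepsilon'_0\le\varepsilon_0$ such that $B(\varepsilon)\ne0$ on $(0,\varepsilon'_0]$ and $D=A/B$ is an $(h_D,k_D,\delta_D,G_D,\varepsilon_D)$-expansion with coefficients $d_r$, where one may take either $\varepsilon_D=\varepsilon_A\wedge\varepsilon_C$ and $G_D=\sum_{k_D<i+j,\,h_A\le i\le k_A,\,h_C\le j\le k_C}|a_i||c_j|\varepsilon_D^{i+j-k_D-\delta_D}+G_A\sum_{h_C\le j\le k_C}|c_j|\varepsilon_D^{j+k_A+\delta_A-k_D-\delta_D}+G_C\sum_{h_A\le i\le k_A}|a_i|\varepsilon_D^{i+k_C+\delta_C-k_D-\delta_D}+G_AG_C\varepsilon_D^{k_A+k_C+\delta_A+\delta_C-k_D-\delta_D}$, or $\varepsilon_D=\varepsilon_A\wedge\varepsilon_B\wedge\tilde\varepsilon_B$ and $G_D=\big(\tfrac{|b_{h_B}|}{2}\big)^{-1}\Big(\sum_{k_A\wedge(h_A+k_B-h_B)<i+j,\,h_B\le i\le k_B,\,h_D\le j\le k_D}|b_i||d_j|\varepsilon_D^{i+j-k_D-h_B-\delta_D}+\sum_{k_A\wedge(h_A+k_B-h_B)<i\le k_A}|a_i|\varepsilon_D^{i-h_B-k_D-\delta_D}+G_A\varepsilon_D^{k_A+\delta_A-h_B-k_D-\delta_D}+G_B\sum_{h_D\le j\le k_D}|d_j|\varepsilon_D^{j+k_B+\delta_B-h_B-k_D-\delta_D}\Big)$.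
   Context: Let $0<\varepsilon_0\le1$. A function $A:(0,\varepsilon_0]\to\mathbb{R}$ (or defined on a smaller interval $(0,\varepsilon'_0]$) is an $(h,k,\delta,G,\varepsilon_A)$-expansion with coefficients $a_h,\dots,a_k$ (integers $h\le k$, reals $a_l$, $\delta\in(0,1]$, $G\in(0,\infty)$, $\varepsilon_A$ in $(0,\varepsilon_0]$ not exceeding the domain endpoint) if the remainder $o_A(\varepsilon):=A(\varepsilon)-\sum_{l=h}^k a_l\varepsilon^l$ satisfies $|o_A(\varepsilon)|\le G\varepsilon^{k+\delta}$ for $0<\varepsilon\le\varepsilon_A$. It is pivotal if $a_h\ne0$. $\mathrm{I}(\cdot)$ denotes the indicator, $\wedge$ the minimum. *)

From Stdlib Require Export Reals ZArith List.
Export ListNotations.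
Open Scope R_scope.

(* integers m, m+1, ..., n  (empty if n < m) *)
Definition zrange (m n : Z) : list Z :=
  map (fun t => (m + Z.of_nat t)%Z) (seq 0 (Z.to_nat (n - m + 1))).

Definition sumZ (m n : Z) (f : Z -> R) : R :=
  fold_right Rplus 0 (map f (zrange m n)).

Definition ind (b : bool) : R := if b then 1 else 0.

Definition cf (h k : Z) (a : Z -> R) (l : Z) : R :=
  if (Z.leb h l && Z.leb l k)%bool then a l else 0.

(* A is an (h,k,delta,G,epsA)-expansion with coefficients a_h..a_k,
   A being defined (at least) on (0, dom], epsA in (0, dom]. *)
Definition expansion (dom : R) (A : R -> R) (h k : Z) (a : Z -> R)
    (delta G epsA : R) : Prop :=
  (h <= k)%Z /\ 0 < delta <= 1 /\ 0 < G /\ 0 < epsA <= dom /\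
  forall e, 0 < e <= epsA ->
    Rabs (A e - sumZ h k (fun l => a l * powerRZ e l)) <= G * Rpower e (IZR k + delta).

Definition pivotal (dom : R) (A : R -> R) (h k : Z) (a : Z -> R)
    (delta G epsA : R) : Prop :=
  expansion dom A h k a delta G epsA /\ a h <> 0.

Definition delta_mix (x y : Z) (dA dB : R) : R :=
  dA * ind (Z.ltb x y) + Rmin dA dB * ind (Z.eqb x y) + dB * ind (Z.ltb y x).

Definition sum_G (hA kA : Z) (a : Z -> R) (dA GA : R)
                 (hB kB : Z) (b : Z -> R) (dB GB : R) (epsC : R) : R :=
  let kC := Z.min kA kB in
  let dC := delta_mix kA kB dA dB in
  GA * Rpower epsC (IZR kA + dA - IZR kC - dC)
  + sumZ (kC + 1) kA (fun i => Rabs (cf hA kA a i) * Rpower epsC (IZR i - IZR kC - dC))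
  + GB * Rpower epsC (IZR kB + dB - IZR kC - dC)
  + sumZ (kC + 1) kB (fun j => Rabs (cf hB kB b j) * Rpower epsC (IZR j - IZR kC - dC)).

Definition prod_coef (hA kA : Z) (a : Z -> R) (hB kB : Z) (b : Z -> R) (r : Z) : R :=
  sumZ hA kA (fun i => sumZ hB kB (fun j => if Z.eqb (i + j) r then a i * b j else 0)).

Definition prod_G (hA kA : Z) (a : Z -> R) (dA GA : R)
                  (hB kB : Z) (b : Z -> R) (dB GB : R) (kC : Z) (dC epsC : R) : R :=
  sumZ hA kA (fun i => sumZ hB kB (fun j =>
     if Z.ltb kC (i + j) then Rabs (a i) * Rabs (b j) * Rpower epsC (IZR (i + j) - IZR kC - dC)
     else 0))
  + GA * sumZ hB kB (fun j => Rabs (b j) * Rpower epsC (IZR j + IZR kA + dA - IZR kC - dC))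
  + GB * sumZ hA kA (fun i => Rabs (a i) * Rpower epsC (IZR i + IZR kB + dB - IZR kC - dC))
  + GA * GB * Rpower epsC (IZR kA + IZR kB + dA + dB - IZR kC - dC).

Definition recip_coefs (hB kB : Z) (b c : Z -> R) : Prop :=
  c (- hB)%Z = / b hB /\
  forall n : Z, (1 <= n <= kB - hB)%Z ->
    c (- hB + n)%Z = - / b hB * sumZ 1 n (fun m => b (hB + m)%Z * c (- hB + n - m)%Z).

Definition recip_eps_tilde (hB kB : Z) (b : Z -> R) (dB GB epsB : R) : R :=
  Rpower (Rabs (b hB) /
          (2 * (sumZ (hB + 1) kB (fun i => Rabs (b i) * Rpower epsB (IZR i - IZR hB - dB))
                + GB * Rpower epsB (IZR kB - IZR hB))))
         (1 / dB).

Definition recip_eps (hB kB : Z) (b : Z -> R) (dB GB epsB : R) : R :=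
  Rmin epsB (recip_eps_tilde hB kB b dB GB epsB).

Definition recip_G (hB kB : Z) (b c : Z -> R) (dB GB epsB : R) : R :=
  let hC := (- hB)%Z in
  let kC := (kB - 2 * hB)%Z in
  let epsC := recip_eps hB kB b dB GB epsB in
  / (Rabs (b hB) / 2) *
  ( sumZ hB kB (fun i => sumZ hC kC (fun j =>
       if Z.ltb (kB - hB) (i + j)
       then Rabs (b i) * Rabs (c j) * Rpower epsC (IZR (i + j) - IZR kB + IZR hB - dB)
       else 0))
    + GB * sumZ hC kC (fun j => Rabs (c j) * Rpower epsC (IZR j + IZR hB))).

Definition quot_G2 (hA kA : Z) (a : Z -> R) (dA GA : R)
                   (hB kB : Z) (b : Z -> R) (dB GB : R)
                   (hD kD : Z) (d : Z -> R) (dD epsD : R) : R :=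
  let m := Z.min kA (hA + kB - hB) in
  / (Rabs (b hB) / 2) *
  ( sumZ hB kB (fun i => sumZ hD kD (fun j =>
       if Z.ltb m (i + j)
       then Rabs (b i) * Rabs (d j) * Rpower epsD (IZR (i + j) - IZR kD - IZR hB - dD)
       else 0))
    + sumZ (m + 1) kA (fun i => Rabs (cf hA kA a i) * Rpower epsD (IZR i - IZR hB - IZR kD - dD))
    + GA * Rpower epsD (IZR kA + dA - IZR hB - IZR kD - dD)
    + GB * sumZ hD kD (fun j => Rabs (d j) * Rpower epsD (IZR j + IZR kB + dB - IZR hB - IZR kD - dD))).

From Pilot Require Import Defs.
From Stdlib Require Import Reals ZArith Lra Lia List.
Open Scope R_scope.

(* Every remainder estimate is a term-by-term bound: for 0 < e <= eps_C and p >= k + delta,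
   e^p <= eps_C^(p - k - delta) * e^(k + delta), so the truncated parts of the Laurent
   polynomials and the products of remainders are absorbed into e^(k + delta) times the stated
   constants.  The product of two truncated expansions splits into the terms of total degree
   <= k_C, whose coefficients are the convolution c_r, and a tail of higher degree.
   For 1/B and A/B, the choice of eps~_B makes all of B but its leading term at most half of
   that term, so |B(e)| >= |b_hB| e^hB / 2.  The recursion defining c makes b * c the unit
   up to degree k_B - h_B, hence b * d equals a up to degree k_A /\ (h_A + k_B - h_B); thus
   1 - B C (resp. A - B D) is O(e^(h_B + k + delta)), and dividing by B costs the factor
   (|b_hB| / 2)^-1 e^-h_B. *)

Definition lsum (L : list Z) (f : Z -> R) : R := fold_right Rplus 0 (map f L).

Lemma lsum_app L1 L2 f : lsum (L1 ++ L2) f = lsum L1 f + lsum L2 f.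
Proof. induction L1 as [|x L1 IH]; unfold lsum in *; simpl; [ring | rewrite IH; ring]. Qed.

Lemma lsum_ext L f g : (forall x, In x L -> f x = g x) -> lsum L f = lsum L g.
Proof.
  induction L as [|x L IH]; intros Hfg; unfold lsum in *; simpl; auto.
  rewrite Hfg, IH; auto with datatypes.
Qed.

Lemma lsum_le L f g : (forall x, In x L -> f x <= g x) -> lsum L f <= lsum L g.
Proof.
  induction L as [|x L IH]; intros Hfg; unfold lsum in *; simpl; [lra|].
  apply Rplus_le_compat; auto with datatypes.
Qed.

Lemma lsum_plus L f g : lsum L (fun x => f x + g x) = lsum L f + lsum L g.
Proof. induction L as [|x L IH]; unfold lsum in *; simpl; [ring | rewrite IH; ring]. Qed.

Lemma lsum_scal_l L c f : lsum L (fun x => c * f x) = c * lsum L f.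
Proof. induction L as [|x L IH]; unfold lsum in *; simpl; [ring | rewrite IH; ring]. Qed.

Lemma lsum_abs_le L f : Rabs (lsum L f) <= lsum L (fun x => Rabs (f x)).
Proof.
  induction L as [|x L IH]; unfold lsum in *; simpl; [rewrite Rabs_R0; lra|].
  eapply Rle_trans; [apply Rabs_triang | lra].
Qed.

Lemma lsum_swap L1 L2 f :
  lsum L1 (fun i => lsum L2 (fun j => f i j)) = lsum L2 (fun j => lsum L1 (fun i => f i j)).
Proof.
  induction L1 as [|x L1 IH].
  - symmetry. induction L2 as [|y L2 IH2]; [reflexivity|].
    unfold lsum in *; simpl in *; rewrite IH2; ring.
  - change (lsum L2 (f x) + lsum L1 (fun i => lsum L2 (fun j => f i j))
            = lsum L2 (fun j => f x j + lsum L1 (fun i => f i j))).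
    rewrite IH, lsum_plus; reflexivity.
Qed.

Lemma lsum_indicator L r g : NoDup L ->
  lsum L (fun i => if (i =? r)%Z then g i else 0) = if in_dec Z.eq_dec r L then g r else 0.
Proof.
  induction L as [|x L IH]; intros HL; simpl; auto.
  inversion HL; subst. unfold lsum in *; simpl. rewrite IH by auto.
  destruct (Z.eqb_spec x r), (Z.eq_dec x r), (in_dec Z.eq_dec r L); subst;
    try contradiction; try congruence; ring.
Qed.

Lemma zrange_In m n x : In x (zrange m n) <-> (m <= x <= n)%Z.
Proof.
  unfold zrange. rewrite in_map_iff. split.
  - intros [t [<- Ht]]. apply in_seq in Ht. lia.
  - intros H. exists (Z.to_nat (x - m)). split; [lia | apply in_seq; lia].
Qed.

Lemma zrange_NoDup m n : NoDup (zrange m n).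
Proof.
  apply NoDup_map_NoDup_ForallPairs; [intros x y _ _ H; lia | apply seq_NoDup].
Qed.

Lemma map_seq_offset {A} n : forall (f : nat -> A) a,
  map f (seq a n) = map (fun t => f (a + t)%nat) (seq 0 n).
Proof.
  induction n as [|n IH]; intros f a; simpl; [reflexivity|].
  rewrite Nat.add_0_r, (IH f (S a)), (IH (fun t => f (a + t)%nat) 1%nat). f_equal.
  apply map_ext; intros; f_equal; lia.
Qed.

Lemma zrange_split m k n : (m - 1 <= k <= n)%Z -> zrange m n = zrange m k ++ zrange (k + 1) n.
Proof.
  intros H. unfold zrange.
  replace (Z.to_nat (n - m + 1)) with (Z.to_nat (k - m + 1) + Z.to_nat (n - (k + 1) + 1))%nat by lia.
  rewrite seq_app, map_app, (map_seq_offset (Z.to_nat (n - (k + 1) + 1))).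
  f_equal. apply map_ext; intros; lia.
Qed.

Lemma zrange_shift m n s : zrange (m + s) (n + s) = map (fun x => (x + s)%Z) (zrange m n).
Proof.
  unfold zrange. rewrite map_map. replace (n + s - (m + s) + 1)%Z with (n - m + 1)%Z by lia.
  apply map_ext; intros; lia.
Qed.

Lemma cf_in h k a x : (h <= x <= k)%Z -> cf h k a x = a x.
Proof. intros H. unfold cf. replace (h <=? x)%Z with true by lia. now replace (x <=? k)%Z with true by lia. Qed.

Lemma cf_out h k a x : ~ (h <= x <= k)%Z -> cf h k a x = 0.
Proof.
  intros H. unfold cf.
  destruct (Z.leb_spec h x), (Z.leb_spec x k); simpl; auto; lia.
Qed.

Lemma sumZ_split m k n f : (m - 1 <= k <= n)%Z -> sumZ m n f = sumZ m k f + sumZ (k + 1) n f.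
Proof. intros H. unfold sumZ. fold (lsum (zrange m n) f). rewrite (zrange_split m k n H). apply lsum_app. Qed.

Lemma sumZ_ext m n f g : (forall x, (m <= x <= n)%Z -> f x = g x) -> sumZ m n f = sumZ m n g.
Proof. intros H. apply lsum_ext. intros x Hx. apply H, zrange_In, Hx. Qed.

Lemma sumZ_le m n f g : (forall x, (m <= x <= n)%Z -> f x <= g x) -> sumZ m n f <= sumZ m n g.
Proof. intros H. apply lsum_le. intros x Hx. apply H, zrange_In, Hx. Qed.

Lemma sumZ_abs_le m n f g : (forall x, (m <= x <= n)%Z -> Rabs (f x) <= g x) ->
  Rabs (sumZ m n f) <= sumZ m n g.
Proof. intros H. eapply Rle_trans; [apply lsum_abs_le | apply sumZ_le, H]. Qed.

Lemma sumZ_plus m n f g : sumZ m n (fun x => f x + g x) = sumZ m n f + sumZ m n g.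
Proof. apply lsum_plus. Qed.

Lemma sumZ_scal_l m n c f : sumZ m n (fun x => c * f x) = c * sumZ m n f.
Proof. apply lsum_scal_l. Qed.

Lemma sumZ_scal_r m n c f : sumZ m n (fun x => f x * c) = sumZ m n f * c.
Proof. rewrite Rmult_comm, <- sumZ_scal_l. apply sumZ_ext; intros; ring. Qed.

Lemma sumZ_zero m n f : (forall x, (m <= x <= n)%Z -> f x = 0) -> sumZ m n f = 0.
Proof.
  intros H. rewrite (sumZ_ext m n f (fun x => 0 * f x)) by (intros x Hx; rewrite H; auto; ring).
  rewrite sumZ_scal_l; ring.
Qed.

Lemma sumZ_nonneg m n f : (forall x, (m <= x <= n)%Z -> 0 <= f x) -> 0 <= sumZ m n f.
Proof. intros H. rewrite <- (sumZ_zero m n (fun _ => 0)) by auto. now apply sumZ_le. Qed.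

Lemma sumZ_swap m n p q f :
  sumZ m n (fun i => sumZ p q (fun j => f i j)) = sumZ p q (fun j => sumZ m n (fun i => f i j)).
Proof. apply lsum_swap. Qed.

Lemma sumZ_mult m n p q f g :
  sumZ m n f * sumZ p q g = sumZ m n (fun i => sumZ p q (fun j => f i * g j)).
Proof.
  rewrite <- sumZ_scal_r. apply sumZ_ext; intros i _. now rewrite <- sumZ_scal_l.
Qed.

Lemma sumZ_empty m n f : (n < m)%Z -> sumZ m n f = 0.
Proof. intros H. unfold sumZ, zrange. now replace (Z.to_nat (n - m + 1)) with 0%nat by lia. Qed.

Lemma sumZ_first m n f : (m <= n)%Z -> sumZ m n f = f m + sumZ (m + 1) n f.
Proof.
  intros H. rewrite (sumZ_split m m n) by lia. f_equal.
  unfold sumZ, zrange. replace (Z.to_nat (m - m + 1)) with 1%nat by lia.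
  simpl. rewrite Z.add_0_r. ring.
Qed.

Lemma sumZ_shift m n s f : sumZ (m + s) (n + s) f = sumZ m n (fun x => f (x + s)%Z).
Proof. unfold sumZ. rewrite zrange_shift, map_map. reflexivity. Qed.

Lemma sumZ_indicator m n r g : sumZ m n (fun j => if (j =? r)%Z then g j else 0) = cf m n g r.
Proof.
  unfold sumZ. fold (lsum (zrange m n) (fun j => if (j =? r)%Z then g j else 0)).
  rewrite lsum_indicator by apply zrange_NoDup.
  destruct (in_dec Z.eq_dec r (zrange m n)) as [Hr | Hr]; rewrite zrange_In in Hr;
    [rewrite cf_in | rewrite cf_out]; auto.
Qed.

Lemma sumZ_regroup lo hi m n p q (F : Z -> Z -> Z -> R) :
  sumZ lo hi (fun r => sumZ m n (fun i => sumZ p q (fun j =>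
     if (i + j =? r)%Z then F i j r else 0)))
  = sumZ m n (fun i => sumZ p q (fun j => cf lo hi (F i j) (i + j))).
Proof.
  rewrite sumZ_swap. apply sumZ_ext; intros i _.
  rewrite sumZ_swap. apply sumZ_ext; intros j _.
  rewrite <- sumZ_indicator. apply sumZ_ext; intros r _.
  now rewrite Z.eqb_sym.
Qed.

Definition lpoly (h k : Z) (a : Z -> R) (e : R) : R := sumZ h k (fun l => a l * powerRZ e l).

Definition lpoly_mul_tail (hA kA : Z) (a : Z -> R) (hB kB : Z) (b : Z -> R) (m : Z) (e : R) : R :=
  sumZ hA kA (fun i => sumZ hB kB (fun j =>
    if (m <? i + j)%Z then a i * b j * powerRZ e (i + j) else 0)).

Lemma lpoly_mul_split hA kA a hB kB b m e : e <> 0 ->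
  lpoly hA kA a e * lpoly hB kB b e
  = lpoly (hA + hB) m (prod_coef hA kA a hB kB b) e + lpoly_mul_tail hA kA a hB kB b m e.
Proof.
  intros He. unfold lpoly, lpoly_mul_tail, prod_coef.
  assert (Hlow : sumZ (hA + hB) m (fun r => sumZ hA kA (fun i => sumZ hB kB (fun j =>
                   if (i + j =? r)%Z then a i * b j else 0)) * powerRZ e r)
               = sumZ hA kA (fun i => sumZ hB kB (fun j =>
                   cf (hA + hB) m (fun r => a i * b j * powerRZ e r) (i + j)))).
  { rewrite <- sumZ_regroup. apply sumZ_ext; intros r _. rewrite <- sumZ_scal_r.
    apply sumZ_ext; intros i _. rewrite <- sumZ_scal_r.
    apply sumZ_ext; intros j _. destruct (i + j =? r)%Z; ring. }
  rewrite Hlow, sumZ_mult, <- sumZ_plus. apply sumZ_ext; intros i Hi.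
  rewrite <- sumZ_plus. apply sumZ_ext; intros j Hj.
  destruct (Z.ltb_spec m (i + j)); [rewrite cf_out by lia | rewrite cf_in by lia];
    rewrite powerRZ_add by exact He; ring.
Qed.

Lemma Rpower_pos x y : 0 < Rpower x y.
Proof. apply exp_pos. Qed.

Lemma Rpower_le_split G e S X Y K : 0 <= G -> 0 < e <= S -> 0 <= Y -> X = Y + K ->
  G * Rpower e X <= G * Rpower S Y * Rpower e K.
Proof.
  intros HG He HY ->. rewrite Rpower_plus, Rmult_assoc.
  apply Rmult_le_compat_l; [exact HG|]. apply Rmult_le_compat_r; [left; apply Rpower_pos|].
  apply Rle_Rpower_l; lra.
Qed.

Lemma Rabs_mul_powerRZ c e l : 0 < e -> Rabs (c * powerRZ e l) = Rabs c * Rpower e (IZR l).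
Proof.
  intros He. rewrite powerRZ_Rpower, Rabs_mult by exact He.
  rewrite (Rabs_pos_eq (Rpower e _)); [reflexivity | left; apply Rpower_pos].
Qed.

Lemma lpoly_abs_mul_le h k a e S X0 K (Y : Z -> R) : 0 < e <= S ->
  (forall i, (h <= i <= k)%Z -> 0 <= Y i /\ IZR i + X0 = Y i + K) ->
  Rabs (lpoly h k a e) * Rpower e X0 <= sumZ h k (fun i => Rabs (a i) * Rpower S (Y i)) * Rpower e K.
Proof.
  intros He HY. rewrite <- sumZ_scal_r.
  apply Rle_trans with (sumZ h k (fun i => Rabs (a i) * Rpower e (IZR i)) * Rpower e X0).
  { apply Rmult_le_compat_r; [left; apply Rpower_pos|].
    apply sumZ_abs_le; intros i _. rewrite Rabs_mul_powerRZ by lra. lra. }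
  rewrite <- sumZ_scal_r. apply sumZ_le; intros i Hi. destruct (HY i Hi) as [HYi Hi'].
  rewrite Rmult_assoc, <- Rpower_plus. apply Rpower_le_split; auto using Rabs_pos.
Qed.

Lemma lpoly_abs_le h k a e S K (Y : Z -> R) : 0 < e <= S ->
  (forall i, (h <= i <= k)%Z -> 0 <= Y i /\ IZR i = Y i + K) ->
  Rabs (lpoly h k a e) <= sumZ h k (fun i => Rabs (a i) * Rpower S (Y i)) * Rpower e K.
Proof.
  intros He HY. rewrite <- (Rmult_1_r (Rabs _)), <- (Rpower_O e) by lra.
  apply lpoly_abs_mul_le; [exact He|]. intros i Hi. destruct (HY i Hi). split; lra.
Qed.

Lemma lpoly_mul_tail_abs_le hA kA a hB kB b m e S t (Y : Z -> R) : 0 < e <= S ->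
  (forall n, (m < n)%Z -> 0 <= Y n /\ IZR n = Y n + t) ->
  Rabs (lpoly_mul_tail hA kA a hB kB b m e)
  <= sumZ hA kA (fun i => sumZ hB kB (fun j =>
       if (m <? i + j)%Z then Rabs (a i) * Rabs (b j) * Rpower S (Y (i + j)%Z) else 0))
     * Rpower e t.
Proof.
  intros He HY. unfold lpoly_mul_tail. rewrite <- sumZ_scal_r.
  apply sumZ_abs_le; intros i _. rewrite <- sumZ_scal_r. apply sumZ_abs_le; intros j _.
  destruct (Z.ltb_spec m (i + j)) as [Hm|Hm]; [|rewrite Rabs_R0; lra].
  destruct (HY _ Hm) as [HYn Hn].
  rewrite Rabs_mul_powerRZ, Rabs_mult by lra.
  apply Rpower_le_split; auto. apply Rmult_le_pos; apply Rabs_pos.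
Qed.

Lemma lpoly_split_cf lo h k m a e : (lo <= h <= k)%Z -> (lo - 1 <= m <= k)%Z ->
  lpoly h k a e = lpoly lo m (cf h k a) e + lpoly (m + 1) k (cf h k a) e.
Proof.
  intros Hh Hm. unfold lpoly. rewrite <- sumZ_split by lia.
  rewrite (sumZ_split lo (h - 1) k) by lia. replace (h - 1 + 1)%Z with h by lia.
  rewrite (sumZ_zero lo (h - 1)), Rplus_0_l by (intros x Hx; rewrite cf_out by lia; ring).
  apply sumZ_ext; intros x Hx. now rewrite cf_in.
Qed.

Lemma delta_mix_bounds x y dA dB : 0 < dA <= 1 -> 0 < dB <= 1 ->
  0 < delta_mix x y dA dB <= 1 /\
  IZR (Z.min x y) + delta_mix x y dA dB <= IZR x + dA /\
  IZR (Z.min x y) + delta_mix x y dA dB <= IZR y + dB.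
Proof.
  intros HA HB. unfold delta_mix, Defs.ind.
  destruct (Z.lt_total x y) as [H|[H|H]].
  - replace (x <? y)%Z with true by lia. replace (x =? y)%Z with false by lia.
    replace (y <? x)%Z with false by lia. rewrite Z.min_l by lia.
    assert (IZR x + 1 <= IZR y) by (rewrite <- plus_IZR; apply IZR_le; lia). lra.
  - subst. rewrite Z.ltb_irrefl, Z.eqb_refl, Z.min_id.
    pose proof (Rmin_l dA dB); pose proof (Rmin_r dA dB).
    assert (0 < Rmin dA dB) by (apply Rmin_glb_lt; lra). lra.
  - replace (x <? y)%Z with false by lia. replace (x =? y)%Z with false by lia.
    replace (y <? x)%Z with true by lia. rewrite Z.min_r by lia.
    assert (IZR y + 1 <= IZR x) by (rewrite <- plus_IZR; apply IZR_le; lia). lra.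
Qed.

Lemma Rabs_triang4 x1 x2 x3 x4 :
  Rabs (x1 + x2 + x3 + x4) <= Rabs x1 + Rabs x2 + Rabs x3 + Rabs x4.
Proof.
  pose proof (Rabs_triang (x1 + x2 + x3) x4); pose proof (Rabs_triang (x1 + x2) x3);
  pose proof (Rabs_triang x1 x2). lra.
Qed.

Ltac nonneg :=
  repeat first
    [ apply Rplus_le_le_0_compat | apply Rmult_le_pos | apply Rabs_pos
    | left; apply Rpower_pos | apply sumZ_nonneg; intros
    | match goal with |- 0 <= (if ?c then _ else _) => destruct c end
    | lra ].

Lemma expansion_scale dom A hA kA a dA GA epsA c :
  expansion dom A hA kA a dA GA epsA -> forall e, 0 < e <= epsA ->
  Rabs (c * A e - sumZ hA kA (fun l => c * a l * powerRZ e l)) <= Rabs c * GA * Rpower e (IZR kA + dA).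
Proof.
  intros [_ [_ [_ [_ HA]]]] e He.
  replace (sumZ hA kA (fun l => c * a l * powerRZ e l)) with (c * lpoly hA kA a e)
    by (unfold lpoly; rewrite <- sumZ_scal_l; apply sumZ_ext; intros; ring).
  rewrite <- Rmult_minus_distr_l, Rabs_mult, Rmult_assoc.
  apply Rmult_le_compat_l; [apply Rabs_pos | exact (HA e He)].
Qed.

Lemma expansion_add dom A B hA kA hB kB a b dA GA epsA dB GB epsB :
  expansion dom A hA kA a dA GA epsA -> expansion dom B hB kB b dB GB epsB ->
  expansion dom (fun e => A e + B e) (Z.min hA hB) (Z.min kA kB)
    (fun r => cf hA kA a r + cf hB kB b r) (delta_mix kA kB dA dB)
    (sum_G hA kA a dA GA hB kB b dB GB (Rmin epsA epsB)) (Rmin epsA epsB).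
Proof.
  intros [hkA [dA_ [GA_ [epsA_ HA]]]] [hkB [dB_ [GB_ [epsB_ HB]]]].
  destruct (delta_mix_bounds kA kB dA dB dA_ dB_) as [dC_ [kdA kdB]].
  set (lo := Z.min hA hB). set (kC := Z.min kA kB) in *. set (dC := delta_mix kA kB dA dB) in *.
  pose proof (Rmin_l epsA epsB) as S_epsA; pose proof (Rmin_r epsA epsB) as S_epsB.
  set (S := Rmin epsA epsB) in *.
  assert (S_ : 0 < S) by (apply Rmin_glb_lt; lra).
  assert (tail_bound : forall k (c : Z -> R) e, (kC <= k)%Z -> 0 < e <= S ->
    Rabs (lpoly (kC + 1) k c e)
    <= sumZ (kC + 1) k (fun i => Rabs (c i) * Rpower S (IZR i - IZR kC - dC)) * Rpower e (IZR kC + dC)).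
  { intros k c e Hk He. apply lpoly_abs_le; [exact He|]. intros i Hi.
    assert (IZR kC + 1 <= IZR i) by (rewrite <- plus_IZR; apply IZR_le; lia). lra. }
  split; [lia|]. split; [exact dC_|]. split.
  { unfold sum_G. fold kC dC.
    assert (0 < GA * Rpower S (IZR kA + dA - IZR kC - dC)) by (apply Rmult_lt_0_compat; [lra | apply Rpower_pos]).
    assert (0 <= GB * Rpower S (IZR kB + dB - IZR kC - dC)) by nonneg.
    assert (0 <= sumZ (kC + 1) kA (fun i => Rabs (cf hA kA a i) * Rpower S (IZR i - IZR kC - dC))) by nonneg.
    assert (0 <= sumZ (kC + 1) kB (fun j => Rabs (cf hB kB b j) * Rpower S (IZR j - IZR kC - dC))) by nonneg.
    lra. }
  split; [lra|].
  intros e He. fold (lpoly lo kC (fun r => cf hA kA a r + cf hB kB b r) e).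
  pose proof (HA e ltac:(lra)) as errA. pose proof (HB e ltac:(lra)) as errB.
  fold (lpoly hA kA a e) in errA. fold (lpoly hB kB b e) in errB.
  rewrite (lpoly_split_cf lo hA kA kC) in errA by lia.
  rewrite (lpoly_split_cf lo hB kB kC) in errB by lia.
  replace (lpoly lo kC (fun r => cf hA kA a r + cf hB kB b r) e)
    with (lpoly lo kC (cf hA kA a) e + lpoly lo kC (cf hB kB b) e)
    by (unfold lpoly; rewrite <- sumZ_plus; apply sumZ_ext; intros; ring).
  pose proof (tail_bound kA (cf hA kA a) e ltac:(lia) ltac:(lra)) as tailA.
  pose proof (tail_bound kB (cf hB kB b) e ltac:(lia) ltac:(lra)) as tailB.
  pose proof (Rpower_le_split GA e S (IZR kA + dA) (IZR kA + dA - IZR kC - dC) (IZR kC + dC)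
                ltac:(lra) ltac:(lra) ltac:(lra) ltac:(ring)) as remA.
  pose proof (Rpower_le_split GB e S (IZR kB + dB) (IZR kB + dB - IZR kC - dC) (IZR kC + dC)
                ltac:(lra) ltac:(lra) ltac:(lra) ltac:(ring)) as remB.
  replace (A e + B e - (lpoly lo kC (cf hA kA a) e + lpoly lo kC (cf hB kB b) e))
    with ((A e - (lpoly lo kC (cf hA kA a) e + lpoly (kC + 1) kA (cf hA kA a) e))
          + (B e - (lpoly lo kC (cf hB kB b) e + lpoly (kC + 1) kB (cf hB kB b) e))
          + lpoly (kC + 1) kA (cf hA kA a) e + lpoly (kC + 1) kB (cf hB kB b) e) by ring.
  eapply Rle_trans; [apply Rabs_triang4|].
  unfold sum_G; fold kC dC. rewrite !Rmult_plus_distr_r. lra.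
Qed.

Lemma Rabs_mult_bound p q G X M : Rabs q <= G * X -> 0 <= G -> Rabs p * X <= M ->
  Rabs (p * q) <= G * M.
Proof.
  intros Hq HG Hp. rewrite Rabs_mult.
  apply Rle_trans with (Rabs p * (G * X)); [apply Rmult_le_compat_l; auto using Rabs_pos|].
  replace (Rabs p * (G * X)) with (G * (Rabs p * X)) by ring. now apply Rmult_le_compat_l.
Qed.

Lemma mul_error_le domA domB A B hA kA hB kB a b dA GA epsA dB GB epsB :
  expansion domA A hA kA a dA GA epsA -> expansion domB B hB kB b dB GB epsB ->
  let kC := Z.min (kA + hB) (kB + hA) in
  let dC := delta_mix (kA + hB) (kB + hA) dA dB in
  let epsC := Rmin epsA epsB in
  forall e, 0 < e <= epsC ->
  Rabs (A e * B e - lpoly (hA + hB) kC (prod_coef hA kA a hB kB b) e)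
  <= prod_G hA kA a dA GA hB kB b dB GB kC dC epsC * Rpower e (IZR kC + dC).
Proof.
  intros [hkA [dA_ [GA_ [epsA_ HA]]]] [hkB [dB_ [GB_ [epsB_ HB]]]] kC dC S e He.
  destruct (delta_mix_bounds (kA + hB) (kB + hA) dA dB dA_ dB_) as [dC_ [kdA kdB]].
  fold kC dC in dC_, kdA, kdB. rewrite plus_IZR in kdA, kdB.
  pose proof (Rmin_l epsA epsB) as S_epsA; pose proof (Rmin_r epsA epsB) as S_epsB.
  fold S in S_epsA, S_epsB.
  assert (IhA : IZR hA <= IZR kA) by (apply IZR_le; lia).
  assert (IhB : IZR hB <= IZR kB) by (apply IZR_le; lia).
  pose proof (HA e ltac:(lra)) as errA. pose proof (HB e ltac:(lra)) as errB.
  fold (lpoly hA kA a e) in errA. fold (lpoly hB kB b e) in errB.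
  set (E := Rpower e (IZR kC + dC)).
  assert (tail : Rabs (lpoly_mul_tail hA kA a hB kB b kC e)
    <= sumZ hA kA (fun i => sumZ hB kB (fun j => if (kC <? i + j)%Z
         then Rabs (a i) * Rabs (b j) * Rpower S (IZR (i + j) - IZR kC - dC) else 0)) * E).
  { apply lpoly_mul_tail_abs_le with (Y := fun n => IZR n - IZR kC - dC); [lra|].
    intros n Hn. assert (IZR kC + 1 <= IZR n) by (rewrite <- plus_IZR; apply IZR_le; lia). lra. }
  assert (remB : Rabs (lpoly hA kA a e * (B e - lpoly hB kB b e))
    <= GB * (sumZ hA kA (fun i => Rabs (a i) * Rpower S (IZR i + IZR kB + dB - IZR kC - dC)) * E)).
  { apply Rabs_mult_bound with (Rpower e (IZR kB + dB)); [exact errB | lra |].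
    apply lpoly_abs_mul_le; [lra|]. intros i Hi.
    assert (IZR hA <= IZR i) by (apply IZR_le; lia). lra. }
  assert (remA : Rabs (lpoly hB kB b e * (A e - lpoly hA kA a e))
    <= GA * (sumZ hB kB (fun j => Rabs (b j) * Rpower S (IZR j + IZR kA + dA - IZR kC - dC)) * E)).
  { apply Rabs_mult_bound with (Rpower e (IZR kA + dA)); [exact errA | lra |].
    apply lpoly_abs_mul_le; [lra|]. intros j Hj.
    assert (IZR hB <= IZR j) by (apply IZR_le; lia). lra. }
  assert (remAB : Rabs ((A e - lpoly hA kA a e) * (B e - lpoly hB kB b e))
    <= GA * GB * Rpower S (IZR kA + IZR kB + dA + dB - IZR kC - dC) * E).
  { rewrite Rabs_mult.
    apply Rle_trans with (GA * Rpower e (IZR kA + dA) * (GB * Rpower e (IZR kB + dB))).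
    { apply Rmult_le_compat; auto using Rabs_pos. }
    rewrite <- Rmult_assoc, (Rmult_assoc GA), (Rmult_comm (Rpower e _) GB), <- Rmult_assoc,
      Rmult_assoc, <- Rpower_plus.
    apply Rpower_le_split; [apply Rmult_le_pos | | |]; lra. }
  replace (lpoly (hA + hB) kC (prod_coef hA kA a hB kB b) e)
    with (lpoly hA kA a e * lpoly hB kB b e - lpoly_mul_tail hA kA a hB kB b kC e)
    by (rewrite (lpoly_mul_split hA kA a hB kB b kC e) by lra; ring).
  replace (A e * B e - _)
    with (lpoly_mul_tail hA kA a hB kB b kC e + lpoly hA kA a e * (B e - lpoly hB kB b e)
          + lpoly hB kB b e * (A e - lpoly hA kA a e)
          + (A e - lpoly hA kA a e) * (B e - lpoly hB kB b e)) by ring.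
  eapply Rle_trans; [apply Rabs_triang4|].
  unfold prod_G; fold E. rewrite !Rmult_plus_distr_r. lra.
Qed.

Lemma expansion_mul domA domB dom A B hA kA hB kB a b dA GA epsA dB GB epsB :
  expansion domA A hA kA a dA GA epsA -> expansion domB B hB kB b dB GB epsB ->
  Rmin epsA epsB <= dom ->
  let kC := Z.min (kA + hB) (kB + hA) in
  let dC := delta_mix (kA + hB) (kB + hA) dA dB in
  let epsC := Rmin epsA epsB in
  expansion dom (fun e => A e * B e) (hA + hB) kC (prod_coef hA kA a hB kB b) dC
    (prod_G hA kA a dA GA hB kB b dB GB kC dC epsC) epsC.
Proof.
  intros HA HB Hdom kC dC S.
  pose proof HA as [hkA [dA_ [GA_ [epsA_ _]]]]. pose proof HB as [hkB [dB_ [GB_ [epsB_ _]]]].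
  fold S in Hdom. assert (S_ : 0 < S) by (apply Rmin_glb_lt; lra).
  split; [lia|]. split; [apply delta_mix_bounds; assumption|]. split.
  { unfold prod_G.
    assert (0 < GA * GB * Rpower S (IZR kA + IZR kB + dA + dB - IZR kC - dC))
      by (apply Rmult_lt_0_compat; [apply Rmult_lt_0_compat; lra | apply Rpower_pos]).
    match goal with |- 0 < ?x + ?y + ?z + _ => assert (0 <= x + y + z) by nonneg end.
    lra. }
  split; [lra|].
  exact (mul_error_le _ _ _ _ _ _ _ _ _ _ _ _ _ _ _ _ HA HB).
Qed.

(* [recip_eps_tilde] is [(|b_hB| / (2 * pivot_rest))^(1/dB)]. *)
Definition pivot_rest (hB kB : Z) (b : Z -> R) (dB GB epsB : R) : R :=
  sumZ (hB + 1) kB (fun i => Rabs (b i) * Rpower epsB (IZR i - IZR hB - dB))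
  + GB * Rpower epsB (IZR kB - IZR hB).

Lemma expansion_leading_error dom B hB kB b dB GB epsB :
  expansion dom B hB kB b dB GB epsB -> forall e, 0 < e <= epsB ->
  Rabs (B e - b hB * Rpower e (IZR hB)) <= pivot_rest hB kB b dB GB epsB * Rpower e (IZR hB + dB).
Proof.
  intros [hk [dB_ [GB_ [epsB_ HB]]]] e He.
  pose proof (HB e He) as errB. fold (lpoly hB kB b e) in errB.
  unfold lpoly in errB. rewrite sumZ_first in errB by lia. fold (lpoly (hB + 1) kB b e) in errB.
  rewrite powerRZ_Rpower in errB by lra.
  assert (tail : Rabs (lpoly (hB + 1) kB b e)
          <= sumZ (hB + 1) kB (fun i => Rabs (b i) * Rpower epsB (IZR i - IZR hB - dB))
             * Rpower e (IZR hB + dB)).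
  { apply lpoly_abs_le; [lra|]. intros i Hi.
    assert (IZR hB + 1 <= IZR i) by (rewrite <- plus_IZR; apply IZR_le; lia). lra. }
  assert (IZR hB <= IZR kB) by (apply IZR_le; lia).
  pose proof (Rpower_le_split GB e epsB (IZR kB + dB) (IZR kB - IZR hB) (IZR hB + dB)
                ltac:(lra) ltac:(lra) ltac:(lra) ltac:(ring)) as remB.
  replace (B e - b hB * Rpower e (IZR hB))
    with ((B e - (b hB * Rpower e (IZR hB) + lpoly (hB + 1) kB b e)) + lpoly (hB + 1) kB b e) by ring.
  eapply Rle_trans; [apply Rabs_triang|]. unfold pivot_rest. lra.
Qed.

Lemma pivotal_abs_ge dom B hB kB b dB GB epsB : pivotal dom B hB kB b dB GB epsB ->
  forall e, 0 < e <= recip_eps hB kB b dB GB epsB ->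
  Rabs (b hB) / 2 * Rpower e (IZR hB) <= Rabs (B e).
Proof.
  intros [HB bh] e He. pose proof HB as [_ [dB_ [GB_ [epsB_ _]]]].
  pose proof (Rmin_l epsB (recip_eps_tilde hB kB b dB GB epsB)) as e_epsB.
  pose proof (Rmin_r epsB (recip_eps_tilde hB kB b dB GB epsB)) as e_tilde.
  unfold recip_eps in He. pose proof (Rabs_pos_lt _ bh) as bh_pos.
  set (Sig := pivot_rest hB kB b dB GB epsB).
  assert (Sig_ : 0 < Sig).
  { assert (0 < GB * Rpower epsB (IZR kB - IZR hB)) by (apply Rmult_lt_0_compat; [lra | apply Rpower_pos]).
    assert (0 <= sumZ (hB + 1) kB (fun i => Rabs (b i) * Rpower epsB (IZR i - IZR hB - dB))) by nonneg.
    unfold Sig, pivot_rest; lra. }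
  assert (small_e : Sig * Rpower e dB <= Rabs (b hB) / 2).
  { assert (e_dB : Rpower e dB <= Rabs (b hB) / (2 * Sig)).
    { rewrite <- (Rpower_1 (Rabs (b hB) / (2 * Sig))) by (apply Rdiv_lt_0_compat; lra).
      replace 1 with (1 / dB * dB) by (field; lra). rewrite <- Rpower_mult.
      apply Rle_Rpower_l; [lra | split; [lra | exact (Rle_trans _ _ _ (proj2 He) e_tilde)]]. }
    replace (Rabs (b hB) / 2) with (Sig * (Rabs (b hB) / (2 * Sig))) by (field; lra).
    apply Rmult_le_compat_l; lra. }
  pose proof (expansion_leading_error _ _ _ _ _ _ _ _ HB e ltac:(lra)) as dominant.
  fold Sig in dominant.
  rewrite Rpower_plus, (Rmult_comm (Rpower e _)), <- Rmult_assoc in dominant.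
  pose proof (Rpower_pos e (IZR hB)) as eh.
  pose proof (Rmult_le_compat_r _ _ _ (Rlt_le _ _ eh) small_e) as small_dev.
  pose proof (Rabs_triang_inv (b hB * Rpower e (IZR hB)) (B e)) as rev_triang.
  rewrite Rabs_mult, (Rabs_pos_eq (Rpower e _)) in rev_triang by lra.
  rewrite <- Rabs_Ropp, Ropp_minus_distr in dominant. lra.
Qed.

Lemma pivotal_neq0 dom B hB kB b dB GB epsB : pivotal dom B hB kB b dB GB epsB ->
  forall e, 0 < e <= recip_eps hB kB b dB GB epsB -> B e <> 0.
Proof.
  intros Hp e He HBe. pose proof (pivotal_abs_ge _ _ _ _ _ _ _ _ Hp e He) as lower.
  pose proof (Rabs_pos_lt _ (proj2 Hp)). pose proof (Rpower_pos e (IZR hB)).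
  rewrite HBe, Rabs_R0 in lower. nra.
Qed.

Lemma Rabs_div_sub_le n bv p M beta : 0 < beta -> beta <= Rabs bv ->
  Rabs (n - bv * p) <= M -> Rabs (n / bv - p) <= M / beta.
Proof.
  intros Hbeta Hbv Hn.
  assert (bv <> 0) by (intros ->; rewrite Rabs_R0 in Hbv; lra).
  replace (n / bv - p) with ((n - bv * p) / bv) by (field; assumption).
  unfold Rdiv. rewrite Rabs_mult, Rabs_inv.
  apply Rmult_le_compat; auto using Rabs_pos.
  - left; apply Rinv_0_lt_compat, Rabs_pos_lt; assumption.
  - apply Rinv_le_contravar; assumption.
Qed.

Lemma pivotal_div_sub_le dom B hB kB b dB GB epsB n p K t e :
  pivotal dom B hB kB b dB GB epsB -> 0 < e <= recip_eps hB kB b dB GB epsB ->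
  Rabs (n - B e * p) <= K * Rpower e (t + IZR hB) ->
  Rabs (n / B e - p) <= / (Rabs (b hB) / 2) * K * Rpower e t.
Proof.
  intros Hp He Hn. pose proof (Rabs_pos_lt _ (proj2 Hp)).
  pose proof (Rpower_pos e (IZR hB)).
  assert (beta_ : 0 < Rabs (b hB) / 2 * Rpower e (IZR hB)) by (apply Rmult_lt_0_compat; lra).
  eapply Rle_trans.
  - exact (Rabs_div_sub_le _ _ _ _ _ beta_ (pivotal_abs_ge _ _ _ _ _ _ _ _ Hp e He) Hn).
  - rewrite Rpower_plus. right. field. lra.
Qed.

Lemma prod_coef_cf hA kA a hB kB b r :
  prod_coef hA kA a hB kB b r = sumZ hA kA (fun i => a i * cf hB kB b (r - i)).
Proof.
  unfold prod_coef. apply sumZ_ext; intros i _.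
  rewrite <- sumZ_indicator, <- sumZ_scal_l. apply sumZ_ext; intros j _.
  destruct (Z.eqb_spec (i + j) r), (Z.eqb_spec j (r - i)); try lia; ring.
Qed.

Lemma recip_coefs_conv hB kB b c : b hB <> 0 -> recip_coefs hB kB b c ->
  forall n, (n <= kB - hB)%Z ->
  prod_coef hB kB b (- hB) (kB - 2 * hB) c n = if (n =? 0)%Z then 1 else 0.
Proof.
  intros bh [c0 crec] n Hn. rewrite prod_coef_cf.
  destruct (Z.ltb_spec n 0) as [Hneg | Hnn].
  { replace (n =? 0)%Z with false by lia.
    apply sumZ_zero; intros i Hi. rewrite cf_out by lia. ring. }
  rewrite (sumZ_split hB (n + hB) kB) by lia.
  rewrite (sumZ_zero (n + hB + 1) kB), Rplus_0_r by (intros i Hi; rewrite cf_out by lia; ring).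
  rewrite (sumZ_ext hB (n + hB) _ (fun i => b i * c (n - i)%Z)) by (intros i Hi; now rewrite cf_in by lia).
  rewrite sumZ_first by lia.
  rewrite (Z.add_comm hB 1), sumZ_shift.
  destruct (Z.eqb_spec n 0) as [-> | Hn0].
  - rewrite sumZ_empty by lia. replace (0 - hB)%Z with (- hB)%Z by lia. rewrite c0. field. exact bh.
  - rewrite (sumZ_ext 1 n _ (fun m => b (hB + m)%Z * c (- hB + n - m)%Z))
      by (intros m Hm; f_equal; f_equal; lia).
    replace (n - hB)%Z with (- hB + n)%Z by lia. rewrite crec by lia. field. exact bh.
Qed.

Lemma lpoly_recip_coefs_conv hB kB b c e : (hB <= kB)%Z -> b hB <> 0 -> recip_coefs hB kB b c ->
  lpoly (hB + - hB) (kB - hB) (prod_coef hB kB b (- hB) (kB - 2 * hB) c) e = 1.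
Proof.
  intros hk bh Hc. unfold lpoly.
  rewrite Z.add_opp_diag_r, sumZ_first, recip_coefs_conv by (auto; lia).
  rewrite sumZ_zero; [simpl; ring|].
  intros r Hr. rewrite recip_coefs_conv by (auto; lia). replace (r =? 0)%Z with false by lia. ring.
Qed.

Lemma recip_error_le dom B hB kB b c dB GB epsB :
  pivotal dom B hB kB b dB GB epsB -> recip_coefs hB kB b c ->
  forall e, 0 < e <= recip_eps hB kB b dB GB epsB ->
  Rabs (/ B e - lpoly (- hB) (kB - 2 * hB) c e)
  <= recip_G hB kB b c dB GB epsB * Rpower e (IZR (kB - 2 * hB) + dB).
Proof.
  intros Hp Hc e He. pose proof Hp as [[hk [dB_ [GB_ [epsB_ HB]]]] bh].
  set (S := recip_eps hB kB b dB GB epsB) in *.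
  assert (S_epsB : S <= epsB) by apply Rmin_l.
  set (kC := (kB - 2 * hB)%Z). set (N := (kB - hB)%Z).
  set (D1 := sumZ hB kB (fun i => sumZ (- hB) kC (fun j => if (N <? i + j)%Z
               then Rabs (b i) * Rabs (c j) * Rpower S (IZR (i + j) - IZR kB + IZR hB - dB) else 0))).
  set (D2 := sumZ (- hB) kC (fun j => Rabs (c j) * Rpower S (IZR j + IZR hB))).
  set (E := Rpower e (IZR kC + dB + IZR hB)).
  assert (IkC : IZR kC = IZR kB - 2 * IZR hB) by (unfold kC; rewrite minus_IZR, mult_IZR; ring).
  pose proof (HB e ltac:(lra)) as errB. fold (lpoly hB kB b e) in errB.
  assert (tail : Rabs (lpoly_mul_tail hB kB b (- hB) kC c N e) <= D1 * E).
  { apply lpoly_mul_tail_abs_le with (Y := fun n => IZR n - IZR kB + IZR hB - dB); [lra|].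
    intros n Hn. assert (IZR N + 1 <= IZR n) by (rewrite <- plus_IZR; apply IZR_le; lia).
    unfold N in *. rewrite minus_IZR in *. lra. }
  assert (remB : Rabs (lpoly (- hB) kC c e * (B e - lpoly hB kB b e)) <= GB * (D2 * E)).
  { apply Rabs_mult_bound with (Rpower e (IZR kB + dB)); [exact errB | lra |].
    apply lpoly_abs_mul_le; [lra|]. intros j Hj.
    assert (IZR (- hB) <= IZR j) by (apply IZR_le; lia). rewrite opp_IZR in *. lra. }
  assert (err : Rabs (1 - B e * lpoly (- hB) kC c e) <= (D1 + GB * D2) * E).
  { rewrite <- (lpoly_recip_coefs_conv hB kB b c e hk bh Hc). fold kC N.
    replace (lpoly (hB + - hB) N (prod_coef hB kB b (- hB) kC c) e)
      with (lpoly hB kB b e * lpoly (- hB) kC c e - lpoly_mul_tail hB kB b (- hB) kC c N e)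
      by (rewrite (lpoly_mul_split hB kB b (- hB) kC c N e) by lra; ring).
    replace (_ - B e * _) with (- lpoly_mul_tail hB kB b (- hB) kC c N e
                                  + - (lpoly (- hB) kC c e * (B e - lpoly hB kB b e))) by ring.
    eapply Rle_trans; [apply Rabs_triang|]. rewrite !Rabs_Ropp. lra. }
  replace (/ B e) with (1 / B e) by (field; exact (pivotal_neq0 _ _ _ _ _ _ _ _ Hp e He)).
  exact (pivotal_div_sub_le _ _ _ _ _ _ _ _ _ _ _ _ _ Hp He err).
Qed.

Lemma expansion_inv dom B hB kB b c dB GB epsB :
  pivotal dom B hB kB b dB GB epsB -> recip_coefs hB kB b c ->
  let epsC := recip_eps hB kB b dB GB epsB in
  epsC <= dom /\ (forall e, 0 < e <= epsC -> B e <> 0) /\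
  pivotal epsC (fun e => / B e) (- hB) (kB - 2 * hB) c dB (recip_G hB kB b c dB GB epsB) epsC.
Proof.
  intros Hp Hc S.
  pose proof Hp as [[hk [dB_ [GB_ [epsB_ _]]]] bh]. pose proof (proj1 Hc) as c0.
  pose proof (Rabs_pos_lt _ bh) as bh_pos.
  assert (c0_nz : c (- hB)%Z <> 0) by (rewrite c0; apply Rinv_neq_0_compat, bh).
  assert (S_epsB : S <= epsB) by apply Rmin_l.
  assert (S_ : 0 < S) by (apply Rmin_glb_lt; [lra | apply Rpower_pos]).
  set (D1 := sumZ hB kB (fun i => sumZ (- hB) (kB - 2 * hB) (fun j => if (kB - hB <? i + j)%Z
               then Rabs (b i) * Rabs (c j) * Rpower S (IZR (i + j) - IZR kB + IZR hB - dB) else 0))).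
  set (D2 := sumZ (- hB) (kB - 2 * hB) (fun j => Rabs (c j) * Rpower S (IZR j + IZR hB))).
  assert (D1_ : 0 <= D1) by nonneg.
  assert (D2_ : 0 < D2).
  { unfold D2. rewrite sumZ_first by lia.
    assert (0 < Rabs (c (- hB)%Z) * Rpower S (IZR (- hB) + IZR hB))
      by (apply Rmult_lt_0_compat; [apply Rabs_pos_lt, c0_nz | apply Rpower_pos]).
    assert (0 <= sumZ (- hB + 1) (kB - 2 * hB) (fun j => Rabs (c j) * Rpower S (IZR j + IZR hB))) by nonneg.
    lra. }
  split; [lra|]. split; [exact (pivotal_neq0 _ _ _ _ _ _ _ _ Hp)|].
  split; [|exact c0_nz].
  split; [lia|]. split; [exact dB_|]. split.
  { change (0 < / (Rabs (b hB) / 2) * (D1 + GB * D2)).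
    apply Rmult_lt_0_compat; [apply Rinv_0_lt_compat; lra|].
    pose proof (Rmult_lt_0_compat GB D2 GB_ D2_). lra. }
  split; [lra|].
  exact (recip_error_le _ _ _ _ _ _ _ _ _ Hp Hc).
Qed.

Lemma prod_coef_below hA kA a hB kB b r : (r < hA + hB)%Z -> prod_coef hA kA a hB kB b r = 0.
Proof.
  intros Hr. rewrite prod_coef_cf. apply sumZ_zero; intros i Hi. rewrite cf_out by lia. ring.
Qed.

Lemma recip_coefs_quot hA kA a hB kB b c kD : b hB <> 0 -> recip_coefs hB kB b c ->
  forall n, (hA <= n <= kA)%Z -> (n <= hA + kB - hB)%Z -> (n <= kD + hB)%Z ->
  prod_coef hB kB b (hA - hB) kD (prod_coef hA kA a (- hB) (kB - 2 * hB) c) n = a n.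
Proof.
  intros bh Hc n Hn Hnk HnD. rewrite prod_coef_cf.
  transitivity (sumZ hB kB (fun i => b i * prod_coef hA kA a (- hB) (kB - 2 * hB) c (n - i))).
  { apply sumZ_ext; intros i Hi. f_equal.
    destruct (Z.leb_spec (hA - hB) (n - i)).
    - apply cf_in; lia.
    - rewrite cf_out, prod_coef_below by lia. reflexivity. }
  transitivity (sumZ hA kA (fun i' => a i' * prod_coef hB kB b (- hB) (kB - 2 * hB) c (n - i'))).
  { transitivity (sumZ hB kB (fun i => sumZ hA kA (fun i' =>
                    b i * a i' * cf (- hB) (kB - 2 * hB) c (n - i - i')))).
    { apply sumZ_ext; intros i _. rewrite prod_coef_cf, <- sumZ_scal_l.
      apply sumZ_ext; intros i' _. ring. }
    rewrite sumZ_swap. apply sumZ_ext; intros i' _. rewrite prod_coef_cf, <- sumZ_scal_l.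
    apply sumZ_ext; intros i _. replace (n - i - i')%Z with (n - i' - i)%Z by lia. ring. }
  transitivity (sumZ hA kA (fun i' => if (i' =? n)%Z then a i' else 0)).
  { apply sumZ_ext; intros i' Hi'. rewrite recip_coefs_conv by (auto; lia).
    destruct (Z.eqb_spec (n - i') 0), (Z.eqb_spec i' n); try lia; ring. }
  rewrite sumZ_indicator. now apply cf_in.
Qed.

Lemma quot_error_le dom A B hA kA hB kB a b c dA GA epsA dB GB epsB :
  expansion dom A hA kA a dA GA epsA -> pivotal dom B hB kB b dB GB epsB -> recip_coefs hB kB b c ->
  let hD := (hA - hB)%Z in
  let kD := Z.min (kA - hB) (kB - 2 * hB + hA) in
  let d := prod_coef hA kA a (- hB) (kB - 2 * hB) c in
  let dD := delta_mix (kA - hB) (kB - 2 * hB + hA) dA dB in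
  let epsD := Rmin (Rmin epsA epsB) (recip_eps_tilde hB kB b dB GB epsB) in
  forall e, 0 < e <= epsD ->
  Rabs (A e / B e - lpoly hD kD d e)
  <= quot_G2 hA kA a dA GA hB kB b dB GB hD kD d dD epsD * Rpower e (IZR kD + dD).
Proof.
  intros HA Hp Hc hD kD d dD S e He.
  pose proof HA as [hkA [dA_ [GA_ [epsA_ errA]]]].
  pose proof Hp as [[hkB [dB_ [GB_ [epsB_ errB]]]] bh].
  destruct (delta_mix_bounds (kA - hB) (kB - 2 * hB + hA) dA dB dA_ dB_) as [dD_ [kdA kdB]].
  fold kD dD in dD_, kdA, kdB. rewrite minus_IZR in kdA. rewrite plus_IZR, minus_IZR, mult_IZR in kdB.
  pose proof (Rmin_l (Rmin epsA epsB) (recip_eps_tilde hB kB b dB GB epsB)) as S_min.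
  pose proof (Rmin_r (Rmin epsA epsB) (recip_eps_tilde hB kB b dB GB epsB)) as S_tilde.
  pose proof (Rmin_l epsA epsB) as min_epsA; pose proof (Rmin_r epsA epsB) as min_epsB.
  fold S in S_min, S_tilde.
  set (m := Z.min kA (hA + kB - hB)).
  assert (IkD : IZR kD + IZR hB = IZR m) by (replace kD with (m - hB)%Z by lia; rewrite minus_IZR; ring).
  set (G1 := sumZ hB kB (fun i => sumZ hD kD (fun j => if (m <? i + j)%Z
               then Rabs (b i) * Rabs (d j) * Rpower S (IZR (i + j) - IZR kD - IZR hB - dD) else 0))).
  set (G2 := sumZ (m + 1) kA (fun i => Rabs (cf hA kA a i) * Rpower S (IZR i - IZR hB - IZR kD - dD))).
  set (G3 := GA * Rpower S (IZR kA + dA - IZR hB - IZR kD - dD)).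
  set (G4 := GB * sumZ hD kD (fun j => Rabs (d j) * Rpower S (IZR j + IZR kB + dB - IZR hB - IZR kD - dD))).
  set (E := Rpower e (IZR kD + dD + IZR hB)).
  pose proof (errA e ltac:(lra)) as errAe. fold (lpoly hA kA a e) in errAe.
  pose proof (errB e ltac:(lra)) as errBe. fold (lpoly hB kB b e) in errBe.
  assert (low_part : lpoly (hB + hD) m (prod_coef hB kB b hD kD d) e = lpoly hA m (cf hA kA a) e).
  { replace (hB + hD)%Z with hA by (unfold hD; lia). apply sumZ_ext; intros n Hn.
    rewrite cf_in by lia. unfold hD, d. rewrite recip_coefs_quot by (auto; lia). reflexivity. }
  assert (tail : Rabs (lpoly_mul_tail hB kB b hD kD d m e) <= G1 * E).
  { apply lpoly_mul_tail_abs_le with (Y := fun n => IZR n - IZR kD - IZR hB - dD); [lra|].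
    intros n Hn. assert (IZR m + 1 <= IZR n) by (rewrite <- plus_IZR; apply IZR_le; lia). lra. }
  assert (tailA : Rabs (lpoly (m + 1) kA (cf hA kA a) e) <= G2 * E).
  { apply lpoly_abs_le; [lra|]. intros i Hi.
    assert (IZR m + 1 <= IZR i) by (rewrite <- plus_IZR; apply IZR_le; lia). lra. }
  assert (remA : GA * Rpower e (IZR kA + dA) <= G3 * E).
  { unfold G3, E. apply Rpower_le_split; lra. }
  assert (remB : Rabs (lpoly hD kD d e * (B e - lpoly hB kB b e)) <= G4 * E).
  { unfold G4. rewrite Rmult_assoc. apply Rabs_mult_bound with (Rpower e (IZR kB + dB)); [exact errBe | lra |].
    apply lpoly_abs_mul_le; [lra|]. intros j Hj.
    assert (IZR hA - IZR hB <= IZR j) by (rewrite <- minus_IZR; apply IZR_le; unfold hD in Hj; lia). lra. }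
  assert (err : Rabs (A e - B e * lpoly hD kD d e) <= (G1 + G2 + G3 + G4) * E).
  { rewrite (lpoly_split_cf hA hA kA m) in errAe by lia.
    pose proof (lpoly_mul_split hB kB b hD kD d m e ltac:(lra)) as Hsplit.
    rewrite low_part in Hsplit.
    replace (A e - B e * lpoly hD kD d e)
      with ((A e - (lpoly hA m (cf hA kA a) e + lpoly (m + 1) kA (cf hA kA a) e))
            + lpoly (m + 1) kA (cf hA kA a) e + - lpoly_mul_tail hB kB b hD kD d m e
            + - (lpoly hD kD d e * (B e - lpoly hB kB b e))) by lra.
    eapply Rle_trans; [apply Rabs_triang4|]. rewrite !Rabs_Ropp, !Rmult_plus_distr_r. lra. }
  apply (pivotal_div_sub_le _ _ _ _ _ _ _ _ _ _ _ _ _ Hp); [split; [lra | apply Rmin_glb; lra] | exact err].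
Qed.

Lemma expansion_div dom A B hA kA hB kB a b c dA GA epsA dB GB epsB :
  expansion dom A hA kA a dA GA epsA -> pivotal dom B hB kB b dB GB epsB -> recip_coefs hB kB b c ->
  let hD := (hA - hB)%Z in
  let kD := Z.min (kA - hB) (kB - 2 * hB + hA) in
  let d := prod_coef hA kA a (- hB) (kB - 2 * hB) c in
  let dD := delta_mix (kA - hB) (kB - 2 * hB + hA) dA dB in
  let epsD := Rmin (Rmin epsA epsB) (recip_eps_tilde hB kB b dB GB epsB) in
  exists eps0', epsD <= eps0' <= dom /\ (forall e, 0 < e <= eps0' -> B e <> 0) /\
    expansion eps0' (fun e => A e / B e) hD kD d dD
      (quot_G2 hA kA a dA GA hB kB b dB GB hD kD d dD epsD) epsD.
Proof.
  intros HA Hp Hc hD kD d dD S.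
  pose proof HA as [hkA [dA_ [GA_ [epsA_ _]]]].
  pose proof Hp as [[hkB [dB_ [GB_ [epsB_ _]]]] bh].
  pose proof (Rabs_pos_lt _ bh) as bh_pos.
  pose proof (Rmin_l (Rmin epsA epsB) (recip_eps_tilde hB kB b dB GB epsB)) as S_min.
  pose proof (Rmin_r (Rmin epsA epsB) (recip_eps_tilde hB kB b dB GB epsB)) as S_tilde.
  pose proof (Rmin_l epsA epsB) as min_epsA; pose proof (Rmin_r epsA epsB) as min_epsB.
  fold S in S_min, S_tilde.
  assert (S_ : 0 < S) by (apply Rmin_glb_lt; [apply Rmin_glb_lt | apply Rpower_pos]; lra).
  exists S. split; [lra|]. split.
  { intros e He. apply (pivotal_neq0 _ _ _ _ _ _ _ _ Hp). split; [lra | apply Rmin_glb; lra]. }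
  split; [lia|]. split; [apply delta_mix_bounds; assumption|]. split.
  { unfold quot_G2; cbv zeta.
    apply Rmult_lt_0_compat; [apply Rinv_0_lt_compat; lra|].
    assert (0 < GA * Rpower S (IZR kA + dA - IZR hB - IZR kD - dD))
      by (apply Rmult_lt_0_compat; [lra | apply Rpower_pos]).
    match goal with |- 0 < ?x + ?y + _ + ?z => assert (0 <= x + y + z) by nonneg end.
    lra. }
  split; [lra|].
  exact (quot_error_le _ _ _ _ _ _ _ _ _ _ _ _ _ _ _ _ HA Hp Hc).
Qed.

Theorem lemma2 (eps0 : R) (Heps0 : 0 < eps0 <= 1) :
  (* (i) scalar multiple *)
  (forall (A : R -> R) (hA kA : Z) (a : Z -> R) (dA GA epsA c : R),
     expansion eps0 A hA kA a dA GA epsA ->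
     forall e, 0 < e <= epsA ->
       Rabs (c * A e - sumZ hA kA (fun l => c * a l * powerRZ e l))
         <= Rabs c * GA * Rpower e (IZR kA + dA))
  /\
  (* (ii) sum *)
  (forall (A B : R -> R) (hA kA hB kB : Z) (a b : Z -> R) (dA GA epsA dB GB epsB : R),
     expansion eps0 A hA kA a dA GA epsA ->
     expansion eps0 B hB kB b dB GB epsB ->
     expansion eps0 (fun e => A e + B e) (Z.min hA hB) (Z.min kA kB)
       (fun r => cf hA kA a r + cf hB kB b r)
       (delta_mix kA kB dA dB)
       (sum_G hA kA a dA GA hB kB b dB GB (Rmin epsA epsB))
       (Rmin epsA epsB))
  /\
  (* (iii) product *)
  (forall (A B : R -> R) (hA kA hB kB : Z) (a b : Z -> R) (dA GA epsA dB GB epsB : R),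
     expansion eps0 A hA kA a dA GA epsA ->
     expansion eps0 B hB kB b dB GB epsB ->
     let kC := Z.min (kA + hB) (kB + hA) in
     let dC := delta_mix (kA + hB) (kB + hA) dA dB in
     let epsC := Rmin epsA epsB in
     expansion eps0 (fun e => A e * B e) (hA + hB) kC
       (prod_coef hA kA a hB kB b) dC
       (prod_G hA kA a dA GA hB kB b dB GB kC dC epsC) epsC)
  /\
  (* (iv) reciprocal *)
  (forall (B : R -> R) (hB kB : Z) (b c : Z -> R) (dB GB epsB : R),
     pivotal eps0 B hB kB b dB GB epsB ->
     recip_coefs hB kB b c ->
     let epsC := recip_eps hB kB b dB GB epsB in
     exists eps0' : R, epsC <= eps0' <= eps0 /\
       (forall e, 0 < e <= eps0' -> B e <> 0) /\
       pivotal eps0' (fun e => / B e) (- hB) (kB - 2 * hB) c dB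
         (recip_G hB kB b c dB GB epsB) epsC)
  /\
  (* (v) quotient *)
  (forall (A B : R -> R) (hA kA hB kB : Z) (a b c : Z -> R) (dA GA epsA dB GB epsB : R),
     expansion eps0 A hA kA a dA GA epsA ->
     pivotal eps0 B hB kB b dB GB epsB ->
     recip_coefs hB kB b c ->
     let hC := (- hB)%Z in
     let kC := (kB - 2 * hB)%Z in
     let dC := dB in
     let epsC := recip_eps hB kB b dB GB epsB in
     let GC := recip_G hB kB b c dB GB epsB in
     let hD := (hA - hB)%Z in
     let kD := Z.min (kA - hB) (kB - 2 * hB + hA) in
     let d := fun r => sumZ hA kA (fun i => sumZ hC kC (fun j =>
                 if Z.eqb (i + j) r then a i * c j else 0)) in
     let dD := delta_mix (kA - hB) (kB - 2 * hB + hA) dA dB in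
     (* first choice of eps_D, G_D *)
     (let epsD := Rmin epsA epsC in
      exists eps0' : R, epsD <= eps0' <= eps0 /\
        (forall e, 0 < e <= eps0' -> B e <> 0) /\
        expansion eps0' (fun e => A e / B e) hD kD d dD
          (prod_G hA kA a dA GA hC kC c dC GC kD dD epsD) epsD)
     /\
     (* second choice of eps_D, G_D *)
     (let epsD := Rmin (Rmin epsA epsB) (recip_eps_tilde hB kB b dB GB epsB) in
      exists eps0' : R, epsD <= eps0' <= eps0 /\
        (forall e, 0 < e <= eps0' -> B e <> 0) /\
        expansion eps0' (fun e => A e / B e) hD kD d dD
          (quot_G2 hA kA a dA GA hB kB b dB GB hD kD d dD epsD) epsD)).
Proof.
  split; [exact (expansion_scale eps0)|].
  split; [exact (expansion_add eps0)|].
  split.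
  { intros A B hA kA hB kB a b dA GA epsA dB GB epsB HA HB.
    apply (expansion_mul eps0 eps0); auto.
    destruct HA as [_ [_ [_ [HepsA _]]]]. pose proof (Rmin_l epsA epsB). lra. }
  split.
  { intros B hB kB b c dB GB epsB Hp Hc epsC.
    destruct (expansion_inv eps0 B hB kB b c dB GB epsB Hp Hc) as [Hdom [Hnz Hinv]].
    exists epsC. split; [split; [apply Rle_refl | exact Hdom]|]. split; assumption. }
  intros A B hA kA hB kB a b c dA GA epsA dB GB epsB HA Hp Hc hC kC dC epsC GC hD kD d dD.
  split; [|exact (expansion_div eps0 A B hA kA hB kB a b c dA GA epsA dB GB epsB HA Hp Hc)].
  destruct (expansion_inv eps0 B hB kB b c dB GB epsB Hp Hc) as [Hdom [Hnz [Hinv _]]].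
  exists epsC. split; [split; [apply Rmin_r | exact Hdom]|]. split; [exact Hnz|].
  exact (expansion_mul eps0 epsC epsC A (fun e => / B e) hA kA hC kC a c dA GA epsA dC GC epsC
           HA Hinv (Rmin_r epsA epsC)).
Qed.
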